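(* Let $G$ be a graph, $r$ a positive integer, and $P\subset V(G)$. Suppose $P$ has a partition $\{P_0,P_1,\dots,P_k\}$ with $\mathcal{D}_G(P_i,3)=\emptyset$ for each $i$ with $0\le i\le k$. Let $d\colon P\to[r+1]$ be a precoloring of $P$ in $G$, and suppose $G$ has an $r$-coloring $f$ with $f(v)=d(v)$ for each $v\in P_0$. Then for each $t$ with $0\le t\le k$, there exists an $(r+t)$-coloring $f_t$ of $G$ with $f_t(v)=d(v)$ for each $v\in\bigcup_{i=0}^t P_i$. In particular, $f_k$ is an $(r+k)$-coloring of $G$ with $f_k(v)=d(v)$ for each $v\in P$.
   Context: For a graph $G$, $Q\subset V(G)$ and a positive integer $k$, $\mathcal{D}_G(Q,k)=\{\{x,y\}\subset Q: x\ne y,\ d_G(x,y)\le k\}$, where $d_G$ is the distance in $G$. $[m]=\{1,\dots,m\}$. A precoloring of $P$ in $G$ is a proper coloring of $G[P]$. An $m$-coloring of $G$ is a proper coloring of $G$ using at most $m$ colors. *)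

From mathcomp Require Import all_boot.
Set Implicit Arguments. Unset Strict Implicit. Unset Printing Implicit Defensive.

Definition simple_graph (T : finType) (e : rel T) : Prop :=
  symmetric e /\ irreflexive e.

(* d_G(x,y) <= k : there is a walk (hence a path) from x to y with at most k edges. *)
Definition dist_le (T : finType) (e : rel T) (k : nat) (x y : T) : Prop :=
  exists p : seq T, [/\ path e x p, last x p = y & size p <= k].

(* D_G(Q,k) = empty : no two distinct vertices of Q are at distance <= k. *)
Definition D_empty (T : finType) (e : rel T) (Q : {set T}) (k : nat) : Prop :=
  forall x y, x \in Q -> y \in Q -> x != y -> ~ dist_le e k x y.

(* colours are natural numbers; [m] = {1,...,m} *)
Definition in_range (m c : nat) : bool := (1 <= c <= m).

Definition proper_on (T : finType) (e : rel T) (A : {set T}) (c : T -> nat) : Prop :=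
  forall x y, x \in A -> y \in A -> e x y -> c x != c y.

Definition m_coloring (T : finType) (e : rel T) (m : nat) (c : T -> nat) : Prop :=
  (forall x y, e x y -> c x != c y) /\ (forall x, in_range m (c x)).

Definition precoloring (T : finType) (e : rel T) (P : {set T}) (m : nat) (d : T -> nat) : Prop :=
  proper_on e P d /\ (forall x, x \in P -> in_range m (d x)).

(* {Q_0,...,Q_k} is a partition of P (blocks indexed by 'I_(k+1), pairwise
   disjoint, union equal to P; empty blocks allowed) *)
Definition is_partition_of (T : finType) (k : nat) (Q : 'I_k.+1 -> {set T}) (P : {set T}) : Prop :=
  (forall i j : 'I_k.+1, i != j -> [disjoint Q i & Q j]) /\
  \bigcup_(i < k.+1) Q i = P.

From mathcomp Require Import all_boot.

(* Colour the blocks one at a time, each with one new colour.  Given an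
   m-colouring g that agrees with d on the blocks done so far, give every vertex
   of the next block S its prescribed colour d, and move to the new colour m+1
   every outside vertex whose g-colour equals the d-colour of one of its
   neighbours in S.  Since the vertices of S are pairwise at distance at least 4,
   two recoloured vertices are never adjacent, and a recoloured vertex has only
   one neighbour in S; vertices of earlier blocks are never recoloured because d
   is proper on P. *)

Set Implicit Arguments.
Unset Strict Implicit.
Unset Printing Implicit Defensive.

Section FarApartSets.

Variables (T : finType) (e : rel T) (S : {set T}).
Hypothesis farS : D_empty e S 3.

Lemma D_empty3_common_neighbour x z y :
  x \in S -> y \in S -> e x z -> e z y -> x = y.
Proof.
move=> xS yS exz ezy; apply/eqP; apply/negPn/negP => /(farS xS yS); apply.
by exists [:: z; y]; rewrite /= exz ezy.
Qed.

Lemma D_empty3_adjacent_neighbours x u w y :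
  x \in S -> y \in S -> e x u -> e u w -> e w y -> x = y.
Proof.
move=> xS yS exu euw ewy; apply/eqP; apply/negPn/negP => /(farS xS yS); apply.
by exists [:: u; w; y]; rewrite /= exu euw ewy.
Qed.

End FarApartSets.

Lemma in_range_widen m n c : m <= n -> in_range m c -> in_range n c.
Proof. by move=> mn /andP[c1 cm]; rewrite /in_range c1 (leq_trans cm mn). Qed.

Lemma proper_onS (T : finType) (e : rel T) (A B : {set T}) (c : T -> nat) :
  A \subset B -> proper_on e B c -> proper_on e A c.
Proof. by move=> /subsetP AB cB x y /AB xB /AB yB; apply: cB. Qed.

Section OneMoreColour.

Variables (T : finType) (e : rel T).
Hypothesis esym : symmetric e.
Variables (m : nat) (g d : T -> nat) (A S : {set T}).
Hypotheses (gcol : m_coloring e m g) (gA : {in A, g =1 d}).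
Hypotheses (dproper : proper_on e (A :|: S) d)
           (dS : forall x, x \in S -> in_range m.+1 (d x)).
Hypotheses (farS : D_empty e S 3) (AS : [disjoint A & S]).

Definition clashes (x : T) : bool := [exists v in S, e x v && (g x == d v)].

Definition extend_coloring (x : T) : nat :=
  if x \in S then d x else if clashes x then m.+1 else g x.

Lemma g_lt_fresh_colour x : g x < m.+1.
Proof. by case/andP: (gcol.2 x). Qed.

Lemma clashesP x :
  reflect (exists2 v, v \in S & e x v /\ g x = d v) (clashes x).
Proof.
apply: (iffP existsP) => [[v /andP[vS /andP[exv /eqP gxv]]] | [v vS [exv gxv]]].
  by exists v.
by exists v; rewrite vS exv gxv eqxx.
Qed.

Lemma no_clash_in_A x : x \in A -> ~~ clashes x.
Proof.
move=> xA; apply/clashesP => -[v vS [exv]]; rewrite gA //; apply/eqP.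
by apply: dproper exv; rewrite inE ?xA ?vS ?orbT.
Qed.

Lemma extend_coloring_in_S x y :
  x \in S -> y \notin S -> e x y -> d x != extend_coloring y.
Proof.
move=> xS yS exy; rewrite /extend_coloring (negbTE yS).
case: (clashesP y) => [[w wS [eyw gyw]] | noclash].
  have -> := D_empty3_common_neighbour farS xS wS exy eyw.
  by rewrite -gyw neq_ltn g_lt_fresh_colour.
by apply/eqP => dxy; apply: noclash; exists x; rewrite // esym.
Qed.

Lemma extend_coloring_out_S x y :
  x \notin S -> y \notin S -> e x y -> extend_coloring x != extend_coloring y.
Proof.
move=> xS yS exy; rewrite /extend_coloring (negbTE xS) (negbTE yS).
case: (clashesP x) => [[v vS [exv gxv]] | _];
  case: (clashesP y) => [[w wS [eyw gyw]] | _].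
- have evx : e v x by rewrite esym.
  have vw := D_empty3_adjacent_neighbours farS vS wS evx exy eyw.
  by move: (gcol.1 x y exy); rewrite gxv gyw vw eqxx.
- by rewrite neq_ltn g_lt_fresh_colour orbT.
- by rewrite neq_ltn g_lt_fresh_colour.
- exact: gcol.1.
Qed.

Lemma extend_coloring_proper x y :
  e x y -> extend_coloring x != extend_coloring y.
Proof.
move=> exy; case xS: (x \in S); case yS: (y \in S).
- by rewrite /extend_coloring xS yS; apply: dproper; rewrite // inE ?xS ?yS orbT.
- by rewrite {1}/extend_coloring xS; apply: extend_coloring_in_S; rewrite ?yS.
- rewrite eq_sym {1}/extend_coloring yS.
  by apply: extend_coloring_in_S; rewrite ?xS // esym.
- by apply: extend_coloring_out_S; rewrite ?xS ?yS.
Qed.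

Lemma extend_coloring_range x : in_range m.+1 (extend_coloring x).
Proof.
rewrite /extend_coloring; case: ifP => [/dS // | _].
case: ifP => _; first by rewrite /in_range leqnn.
exact: in_range_widen (leqnSn m) (gcol.2 x).
Qed.

Lemma extend_coloring_agrees : {in A :|: S, extend_coloring =1 d}.
Proof.
move=> x /setUP[xA | xS]; rewrite /extend_coloring; last by rewrite xS.
by rewrite (disjointFr AS xA) (negbTE (no_clash_in_A xA)) gA.
Qed.

Lemma one_more_colour :
  exists2 g' : T -> nat, m_coloring e m.+1 g' & {in A :|: S, g' =1 d}.
Proof.
exists extend_coloring; last exact: extend_coloring_agrees.
by split; [apply: extend_coloring_proper | apply: extend_coloring_range].
Qed.

End OneMoreColour.

Theorem lemma4 (T : finType) (e : rel T) (r k : nat) (P : {set T})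
    (Q : 'I_k.+1 -> {set T}) (d : T -> nat) (f : T -> nat) :
  simple_graph e ->
  0 < r ->
  is_partition_of Q P ->
  (forall i, D_empty e (Q i) 3) ->
  precoloring e P r.+1 d ->
  m_coloring e r f ->
  (forall v, v \in Q ord0 -> f v = d v) ->
  forall t : nat, t <= k ->
    exists ft : T -> nat,
      m_coloring e (r + t) ft /\
      (forall (i : 'I_k.+1) v, i <= t -> v \in Q i -> ft v = d v).
Proof.
move=> [esym _] _ [Qdisj QP] farQ [dP drange] fcol f0.
have QsubP i : Q i \subset P by rewrite -QP; apply: bigcup_sup.
elim=> [|t IH] lt_t_k.
  exists f; rewrite addn0; split=> // i v; rewrite leqn0 => /eqP i0.
  have -> : i = ord0 by apply: val_inj.
  exact: f0.
have [ft [ftcol ftd]] := IH (ltnW lt_t_k).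
pose j : 'I_k.+1 := Ordinal (lt_t_k : t.+1 < k.+1).
pose A := \bigcup_(i : 'I_k.+1 | i <= t) Q i.
have AjP : A :|: Q j \subset P.
  by rewrite subUset QsubP andbT; apply/bigcupsP => i _.
have AjD : [disjoint A & Q j].
  rewrite disjoint_sym; apply: bigcup_disjoint => i it; apply: Qdisj.
  by rewrite -val_eqE /= neq_ltn ltnS it orbT.
have ftA : {in A, ft =1 d} by move=> v /bigcupP[i it]; apply: ftd.
have djR v : v \in Q j -> in_range (r + t).+1 (d v).
  by move=> /(subsetP (QsubP j)) /drange; apply: in_range_widen; rewrite ltnS leq_addr.
have [g gcol gd] := one_more_colour esym ftcol ftA (proper_onS AjP dP) djR (farQ j) AjD.
exists g; rewrite addnS; split=> // i v; rewrite leq_eqVlt => /orP[/eqP it | it] vi;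
  apply: gd; apply/setUP.
  by right; have <- : i = j by apply: val_inj.
by left; apply/bigcupP; exists i.
Qed.
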